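(* Let $\varepsilon\in(0,1]$, $L\in[0,\infty)$, $q\in(1,\infty)$, let $b\in[1,\infty)$ satisfy $\max\{1,2L\}=\varepsilon b^{q-1}$, let $K\in\mathbb N\cap[\frac{2Lb}{\varepsilon},\frac{2Lb}{\varepsilon}+1]$, let $f\colon\mathbb R\to\mathbb R$ satisfy $|f(x)-f(y)|\le L|x-y|$ for all $x,y\in\mathbb R$, let $\mathfrak x_k=-b+\frac{2kb}{K}$ and $c_k=\frac{K(f(\mathfrak x_{\min\{k+1,K\}})-2f(\mathfrak x_k)+f(\mathfrak x_{\max\{k-1,0\}}))}{2b}$ for $k\in\{0,\dots,K\}$, let $\mathbf F=\mathbf A_{1,f(\mathfrak x_0)}\bullet\bigl(\bigoplus_{k=0}^K(c_k\circledast(\mathfrak i_1\bullet\mathbf A_{1,-\mathfrak x_k}))\bigr)$, and let $\mathfrak r(x)=\max\{x,0\}$. Then (i) $|(\mathcal R_{\mathfrak r}(\mathbf F))(x)-(\mathcal R_{\mathfrak r}(\mathbf F))(y)|\le L|x-y|$ for all $x,y\in\mathbb R$; (ii) $\sup_{x\in[-b,b]}|(\mathcal R_{\mathfrak r}(\mathbf F))(x)-f(x)|\le\frac{2Lb}{K}\le\varepsilon$; (iii) $|(\mathcal R_{\mathfrak r}(\mathbf F))(x)-f(x)|\le\varepsilon\max\{1,|x|^q\}$ for all $x\in\mathbb R$; (iv) $\mathbb D_1(\mathbf F)\le2(\max\{1,2L\})^{q/(q-1)}\varepsilon^{-q/(q-1)}+1$; and (v) $\mathcal P(\mathbf F)=3\mathbb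 D_1(\mathbf F)+1\le12(\max\{1,2L\})^{q/(q-1)}\varepsilon^{-q/(q-1)}$.
   Context: Artificial neural networks (ANNs). Let $\mathbb N=\{1,2,\dots\}$ and $\mathbf N=\bigcup_{L\in\mathbb N}\bigcup_{l_0,\dots,l_L\in\mathbb N}\prod_{k=1}^L(\mathbb R^{l_k\times l_{k-1}}\times\mathbb R^{l_k})$. For $\Phi=((W_1,B_1),\dots,(W_L,B_L))$ in the $(l_0,\dots,l_L)$ component, $\mathcal P(\Phi)=\sum_{k=1}^Ll_k(l_{k-1}+1)$, $\mathcal L(\Phi)=L$, $\mathcal I(\Phi)=l_0$, $\mathcal O(\Phi)=l_L$, $\mathbb D_1(\Phi)=l_1$. For $a\in C(\mathbb R,\mathbb R)$ the realization is $(\mathcal R_a(\Phi))(x_0)=W_Lx_{L-1}+B_L$ with $x_k=\mathfrak M_{a,l_k}(W_kx_{k-1}+B_k)$, $k=1,\dots,L-1$, $\mathfrak M_{a,m}$ applying $a$ componentwise. $\operatorname I_n$ is the identity matrix; $\mathbf A_{W,B}=((W,B))$ (for reals $w,b$, $\mathbf A_{w,b}$ has $1\times1$ weight $w$ and bias $b$). Composition: for $\Phi_1=((W_1,B_1),\dots,(W_L,B_L))$, $\Phi_2=((\mathscr W_1,\mathscr B_1),\dots,(\mathscr W_{\mathfrak L},\mathscr B_{\mathfrak L}))$ with $\mathcal I(\Phi_1)=\mathcal O(\Phi_2)$, $\Phi_1\bullet\Phi_2=((\mathscr W_1,\mathscr B_1),\dots,(\mathscr W_{\mathfrak L-1},\mathscr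 B_{\mathfrak L-1}),(W_1\mathscr W_{\mathfrak L},W_1\mathscr B_{\mathfrak L}+B_1),(W_2,B_2),\dots,(W_L,B_L))$. $\lambda\circledast\Phi=\mathbf A_{\lambda\operatorname I_{\mathcal O(\Phi)},0}\bullet\Phi$. $\mathbf P_n(\Phi_1,\dots,\Phi_n)$ (equal lengths) has $k$-th layer $(\operatorname{diag}(W_{1,k},\dots,W_{n,k}),(B_{1,k},\dots,B_{n,k}))$. $\mathfrak S_{m,n}=\mathbf A_{(\operatorname I_m\cdots\operatorname I_m),0}$, $\mathfrak T_{m,n}=\mathbf A_{(\operatorname I_m\cdots\operatorname I_m)^\top,0}$ ($n$ blocks). For $\Phi_u,\dots,\Phi_v$ with equal $\mathcal L,\mathcal I,\mathcal O$: $\bigoplus_{k=u}^v\Phi_k=\mathfrak S_{\mathcal O(\Phi_u),v-u+1}\bullet([\mathbf P_{v-u+1}(\Phi_u,\dots,\Phi_v)]\bullet\mathfrak T_{\mathcal I(\Phi_u),v-u+1})$. $\mathfrak i_n=((\operatorname I_n,0),(\operatorname I_n,0))$. *)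

From HB Require Import structures.
From mathcomp Require Import all_boot all_order all_algebra.
From mathcomp Require Import all_classical all_reals all_analysis.
Set Implicit Arguments. Unset Strict Implicit. Unset Printing Implicit Defensive.
Import Order.TTheory GRing.Theory Num.Theory.
Local Open Scope ring_scope.

(* A layer (W_k, B_k) in R^{l_k x l_{k-1}} x R^{l_k} is stored together with  *)
(* its dimensions l_k (lout) and l_{k-1} (lin).  An ANN                       *)
(* Phi = ((W_1,B_1),...,(W_L,B_L)) is the list of its layers, first layer     *)
(* first.  Elements of the set N are exactly the lists satisfying [is_ann].   *)

Record layer (R : Type) := Layer {
  lout : nat; lin : nat; lW : 'M[R]_(lout, lin); lB : 'cV[R]_lout }.
Arguments Layer {R} lout lin lW lB.

Definition ann (R : Type) := seq (layer R).

Fixpoint dims_match (R : Type) (l : layer R) (s : seq (layer R)) : bool :=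
  match s with [::] => true | l' :: s' => (lin l' == lout l) && dims_match l' s' end.

Definition is_ann (R : Type) (Phi : ann R) : bool :=
  match Phi with [::] => false | l :: s => dims_match l s end.

Section ANN.
Variable R : pzRingType.
Implicit Types (Phi : ann R).

Definition ldef : layer R := Layer 0 0 0 0.

Definition annP Phi : nat := \sum_(l <- Phi) lout l * (lin l + 1).
Definition annL Phi : nat := size Phi.
Definition annI Phi : nat := lin (head ldef Phi).
Definition annO Phi : nat := lout (last ldef Phi).
Definition annD1 Phi : nat := lout (head ldef Phi).

Definition dmul r c c' d (A : 'M[R]_(r, c)) (B : 'M[R]_(c', d)) : 'M[R]_(r, d) :=
  match c' =P c with ReflectT e => A *m castmx (e, erefl d) B | ReflectF _ => 0 end.

Definition aff (l : layer R) m (v : 'cV[R]_m) : 'cV[R]_(lout l) :=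
  match m =P lin l with
  | ReflectT e => lW l *m castmx (e, erefl 1%N) v + lB l
  | ReflectF _ => 0 end.

(* Realization R_a(Phi) : R^{I(Phi)} -> R^{O(Phi)}, on dimension-tagged vectors *)
Fixpoint realize_rec (a : R -> R) Phi m (v : 'cV[R]_m) : {n : nat & 'cV[R]_n} :=
  match Phi with
  | [::] => existT _ m v
  | [:: l] => existT _ (lout l) (aff l v)
  | l :: Phi' => realize_rec a Phi' (map_mx a (aff l v))
  end.

Definition vhead (x : {n : nat & 'cV[R]_n}) : R :=
  match x with existT n v =>
    match n return 'cV[R]_n -> R with 0 => fun _ => 0 | n'.+1 => fun v => v ord0 ord0 end v
  end.

Definition realize1 (a : R -> R) Phi (x : R) : R :=
  vhead (realize_rec a Phi (const_mx x : 'cV[R]_1)).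

Definition affA m n (W : 'M[R]_(n, m)) (B : 'cV[R]_n) : ann R := [:: Layer n m W B].
Definition affA1 (w b : R) : ann R := affA (w%:M : 'M[R]_1) (b%:M : 'cV[R]_1).

Definition merge (l1 lL : layer R) : layer R :=
  Layer (lout l1) (lin lL) (dmul (lW l1) (lW lL)) (dmul (lW l1) (lB lL) + lB l1).

Definition comp Phi1 Phi2 : ann R :=
  match Phi1, rev Phi2 with
  | l1 :: Phi1', lL :: rPhi2' => rev rPhi2' ++ merge l1 lL :: Phi1'
  | _, _ => [::]
  end.

Definition scal (lambda : R) Phi : ann R :=
  comp (affA (lambda%:M : 'M[R]_(annO Phi)) (0 : 'cV[R]_(annO Phi))) Phi.

Definition idnet n : ann R :=
  [:: Layer n n (1%:M) 0; Layer n n (1%:M) 0].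

(* parallelization P_n(Phi_1,...,Phi_n) (equal lengths):
   k-th layer = (diag(W_{1,k},...,W_{n,k}), (B_{1,k},...,B_{n,k})) *)
Definition ldiag (l l' : layer R) : layer R :=
  Layer (lout l + lout l') (lin l + lin l')
    (block_mx (lW l) 0 0 (lW l')) (col_mx (lB l) (lB l')).

Definition par (Phis : seq (ann R)) : ann R :=
  [seq foldr ldiag ldef [seq nth ldef Phi k | Phi <- Phis]
  | k <- iota 0 (size (head [::] Phis))].

(* S_{m,n} = A_{(I_m ... I_m), 0} and T_{m,n} = A_{(I_m ... I_m)^T, 0}, n blocks *)
Definition sumS m n : ann R :=
  affA (\matrix_(i < m, j < n * m) (((j %% m)%N == i)%:R) : 'M[R]_(m, n * m)) 0.
Definition sumT m n : ann R :=
  affA (\matrix_(i < n * m, j < m) (((i %% m)%N == j)%:R) : 'M[R]_(n * m, m)) 0.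

Definition dsum (u v : nat) (Phi : nat -> ann R) : ann R :=
  comp (sumS (annO (Phi u)) (v - u + 1))
    (comp (par [seq Phi k | k <- iota u (v - u + 1)]) (sumT (annI (Phi u)) (v - u + 1))).

End ANN.

Definition relu (R : realType) (x : R) : R := Num.max x 0.

Definition gridx (R : realType) (b : R) (K k : nat) : R :=
  - b + 2 * k%:R * b / K%:R.

Definition coefc (R : realType) (f : R -> R) (b : R) (K k : nat) : R :=
  K%:R * (f (gridx b K (minn k.+1 K)) - 2 * f (gridx b K k) + f (gridx b K k.-1))
  / (2 * b).

Definition Fnet (R : realType) (f : R -> R) (b : R) (K : nat) : ann R :=
  comp (affA1 1 (f (gridx b K 0)))
    (dsum 0 K (fun k => scal (coefc f b K k) (comp (idnet R 1) (affA1 1 (- gridx b K k))))).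

(* The network realizes x |-> f(x_0) + sum_k c_k relu(x - x_k), and the c_k are
   the jumps of the difference quotients of f on the grid x_0 < ... < x_K of mesh
   h = 2b/K.  Summation by parts turns the realization into the piecewise linear
   interpolant of f, a combination of clipped ramps relu(x - x_j) - relu(x - x_{j+1})
   with slopes bounded by L; the ramps telescope, so the interpolant is L-Lipschitz,
   and since it agrees with f at the nodes its error is at most 2L times the distance
   to a node.  This is at most Lh <= eps on [-b, b], and at most 2L|x| <= eps|x|^q
   outside because max{1, 2L} = eps b^(q-1).  Finally D_1(F) = K + 1 and
   P(F) = 3K + 4, while K <= 2Lb/eps + 1 <= b^q + 1 and
   max{1, 2L}^(q/(q-1)) eps^(-q/(q-1)) = b^q. *)

From Pilot Require Import Defs.
From HB Require Import structures.
From mathcomp Require Import all_boot all_order all_algebra.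
From mathcomp Require Import all_classical all_reals all_analysis.
From mathcomp Require Import zify ring lra.
Import Order.TTheory GRing.Theory Num.Theory.
Local Open Scope ring_scope.
Set Implicit Arguments. Unset Strict Implicit. Unset Printing Implicit Defensive.

Section MatrixEntries.
Variable R : pzRingType.

(* Entries addressed by natural numbers, [0] out of range: this sidesteps the
   casts between dimensions that the layers of [Defs] match only propositionally. *)
Definition mxentry m n (A : 'M[R]_(m, n)) (i j : nat) : R :=
  if insub i : option 'I_m is Some i' then
    if insub j : option 'I_n is Some j' then A i' j' else 0 else 0.

Lemma mxentryE m n (A : 'M[R]_(m, n)) i j (lt_im : (i < m)%N) (lt_jn : (j < n)%N) :
  mxentry A i j = A (Ordinal lt_im) (Ordinal lt_jn).
Proof. by rewrite /mxentry (@insubT _ _ 'I_m _ lt_im) (@insubT _ _ 'I_n _ lt_jn). Qed.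

Lemma mxentry_ord m n (A : 'M[R]_(m, n)) (i : 'I_m) (j : 'I_n) : mxentry A i j = A i j.
Proof. by rewrite /mxentry !valK. Qed.

Lemma mxentry_out m n (A : 'M[R]_(m, n)) i j :
  ~~ ((i < m)%N && (j < n)%N) -> mxentry A i j = 0.
Proof.
rewrite negb_and /mxentry => /orP[ge_im|ge_jn]; first by rewrite insubF // (negbTE ge_im).
by case: insubP => // *; rewrite insubF // (negbTE ge_jn).
Qed.

Lemma mxentry_def m n (A : 'M[R]_(m, n)) (F : nat -> nat -> R) :
  (forall (i : 'I_m) (j : 'I_n), A i j = F i j) ->
  forall i j, mxentry A i j = if (i < m)%N && (j < n)%N then F i j else 0.
Proof.
move=> AF i j; case: ifP => [/andP[lt_im lt_jn]|/negbT out]; last exact: mxentry_out.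
by rewrite mxentryE AF.
Qed.

Lemma mxentry0 m n i j : mxentry (0 : 'M[R]_(m, n)) i j = 0.
Proof. by rewrite (@mxentry_def _ _ _ (fun _ _ => 0)) ?if_same // => *; rewrite mxE. Qed.

Lemma mxentry_const m n (x : R) i j :
  mxentry (const_mx x : 'M[R]_(m, n)) i j = if (i < m)%N && (j < n)%N then x else 0.
Proof. by apply: mxentry_def => *; rewrite mxE. Qed.

Lemma mxentry_scalar1 (x : R) : mxentry (x%:M : 'M[R]_1) 0 0 = x.
Proof. by rewrite (mxentry_ord _ ord0 ord0) mxE. Qed.

Lemma mxentryD m n (A B : 'M[R]_(m, n)) i j :
  mxentry (A + B) i j = mxentry A i j + mxentry B i j.
Proof.
have [/andP[lt_im lt_jn]|out] := boolP ((i < m)%N && (j < n)%N).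
  by rewrite !mxentryE mxE.
by rewrite !mxentry_out ?addr0.
Qed.

Lemma mxentry_mul m c d (A : 'M[R]_(m, c)) (B : 'M[R]_(c, d)) i j :
  mxentry (A *m B) i j = \sum_(k < c) mxentry A i k * mxentry B k j.
Proof.
have [/andP[lt_im lt_jd]|out] := boolP ((i < m)%N && (j < d)%N).
  by rewrite mxentryE mxE; apply: eq_bigr => k _; rewrite -!mxentry_ord.
rewrite mxentry_out // big1 // => k _; case/nandP: out => [ge_im|ge_jd].
  by rewrite [mxentry A _ _]mxentry_out ?mul0r // (negbTE ge_im).
by rewrite [mxentry B _ _]mxentry_out ?mulr0 // (negbTE ge_jd) andbF.
Qed.

Lemma mxentry_castmx m n m' n' (e : (m = m') * (n = n')) (A : 'M[R]_(m, n)) i j :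
  mxentry (castmx e A) i j = mxentry A i j.
Proof. by case: e => e1 e2; case: m' / e1; case: n' / e2; rewrite castmx_id. Qed.

Lemma mxentry_map (a : R -> R) m n (A : 'M[R]_(m, n)) i j :
  (i < m)%N -> (j < n)%N -> mxentry (map_mx a A) i j = a (mxentry A i j).
Proof. by move=> lt_im lt_jn; rewrite !mxentryE mxE. Qed.

Lemma mxentry_col m1 m2 n (A : 'M[R]_(m1, n)) (B : 'M[R]_(m2, n)) i j :
  mxentry (col_mx A B) i j = if (i < m1)%N then mxentry A i j else mxentry B (i - m1) j.
Proof.
have [/andP[lt_i lt_jn]|out] := boolP ((i < m1 + m2)%N && (j < n)%N).
  rewrite mxentryE mxE; case: splitP => k /= ->.
    by rewrite ltn_ord -(mxentry_ord A k (Ordinal lt_jn)).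
  by rewrite ltnNge leq_addr addKn -(mxentry_ord B k (Ordinal lt_jn)).
by rewrite mxentry_out //; case: ifP => lt_i1; rewrite mxentry_out //; move: out lt_i1; lia.
Qed.

Lemma mxentry_row m n1 n2 (A : 'M[R]_(m, n1)) (B : 'M[R]_(m, n2)) i j :
  mxentry (row_mx A B) i j = if (j < n1)%N then mxentry A i j else mxentry B i (j - n1).
Proof.
have [/andP[lt_im lt_j]|out] := boolP ((i < m)%N && (j < n1 + n2)%N).
  rewrite mxentryE mxE; case: splitP => k /= ->.
    by rewrite ltn_ord -(mxentry_ord A (Ordinal lt_im) k).
  by rewrite ltnNge leq_addr addKn -(mxentry_ord B (Ordinal lt_im) k).
by rewrite mxentry_out //; case: ifP => lt_j1; rewrite mxentry_out //; move: out lt_j1; lia.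
Qed.

Lemma mxentry_dmul r c c' d (A : 'M[R]_(r, c)) (B : 'M[R]_(c', d)) i j :
  mxentry (dmul A B) i j = if c' == c then \sum_(k < c) mxentry A i k * mxentry B k j else 0.
Proof.
rewrite /dmul; case: eqP => [e|_]; last by rewrite mxentry0.
by rewrite mxentry_mul; apply: eq_bigr => k _; rewrite mxentry_castmx.
Qed.

Lemma mxentry_aff (l : layer R) m (v : 'cV[R]_m) i j :
  mxentry (aff l v) i j = if m == lin l
    then \sum_(k < lin l) mxentry (lW l) i k * mxentry v k j + mxentry (lB l) i j else 0.
Proof.
rewrite /aff; case: eqP => [e|_]; last by rewrite mxentry0.
by rewrite mxentryD mxentry_mul; congr (_ + _); apply: eq_bigr => k _; rewrite mxentry_castmx.
Qed.

End MatrixEntries.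

Section ShallowNetworks.
Variable R : pzRingType.

Lemma vhead_mxentry n (v : 'cV[R]_n) : vhead (existT _ n v) = mxentry v 0 0.
Proof. by case: n v => [|n] v /=; [rewrite mxentry_out | rewrite (mxentry_ord v ord0 ord0)]. Qed.

Lemma realize1_two_layers (a : R -> R) (l1 l2 : layer R) x :
  lin l1 = 1%N -> lin l2 = lout l1 ->
  realize1 a [:: l1; l2] x =
  \sum_(0 <= k < lin l2) mxentry (lW l2) 0 k * a (mxentry (lW l1) k 0 * x + mxentry (lB l1) k 0)
    + mxentry (lB l2) 0 0.
Proof.
case: l1 => m1 n1 W1 B1; case: l2 => m2 n2 W2 B2 /= n1E n2E; subst n1 n2.
rewrite /realize1 [realize_rec _ _ _]/= vhead_mxentry (mxentry_aff (Layer _ _ W2 B2)) eqxx.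
rewrite big_mkord; congr (_ + _); apply: eq_bigr => k _.
by rewrite mxentry_map // (mxentry_aff (Layer _ _ W1 B1)) eqxx big_ord1 mxentry_const.
Qed.

Definition scalar_layer (l : layer R) := (lout l == 1%N) && (lin l == 1%N).

Lemma lout_diag_layer (s : seq (layer R)) : all scalar_layer s ->
  lout (foldr (@ldiag R) (ldef R) s) = size s.
Proof. by elim: s => //= l s IH /andP[/andP[/eqP -> _] /IH ->]. Qed.

Lemma lin_diag_layer (s : seq (layer R)) : all scalar_layer s ->
  lin (foldr (@ldiag R) (ldef R) s) = size s.
Proof. by elim: s => //= l s IH /andP[/andP[_ /eqP ->] /IH ->]. Qed.

Lemma mxentry_W_diag_layer (s : seq (layer R)) i j : all scalar_layer s ->
  mxentry (lW (foldr (@ldiag R) (ldef R) s)) i j =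
  if (i == j) && (i < size s)%N then mxentry (lW (nth (ldef R) s i)) 0 0 else 0.
Proof.
elim: s i j => [|[m n W B] s IH] i j /=; first by rewrite mxentry0 andbF.
case/andP=> /andP[/eqP/= m1 /eqP/= n1] s_scalar; subst m n.
rewrite mxentry_col; case: i => [|i]; rewrite /= mxentry_row;
  by case: j => [|j]; rewrite /= ?mxentry0 // !subn1 /= IH.
Qed.

Lemma mxentry_B_diag_layer (s : seq (layer R)) i : all scalar_layer s ->
  mxentry (lB (foldr (@ldiag R) (ldef R) s)) i 0 =
  if (i < size s)%N then mxentry (lB (nth (ldef R) s i)) 0 0 else 0.
Proof.
elim: s i => [|[m n W B] s IH] i /=; first by rewrite mxentry0.
case/andP=> /andP[/eqP/= m1 _] s_scalar; subst m.
by rewrite mxentry_col; case: i => [|i] //=; rewrite subn1 IH.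
Qed.

Lemma mxentry_W_merge (l1 lL : layer R) i j :
  mxentry (lW (Defs.merge l1 lL)) i j = mxentry (dmul (lW l1) (lW lL)) i j.
Proof. by []. Qed.

Lemma mxentry_B_merge (l1 lL : layer R) i j :
  mxentry (lB (Defs.merge l1 lL)) i j = mxentry (dmul (lW l1) (lB lL)) i j + mxentry (lB l1) i j.
Proof. exact: mxentryD. Qed.

End ShallowNetworks.

Section NetworkStructure.
Variables (R : realType) (f : R -> R) (b : R) (K : nat).

Definition summand k : ann R :=
  scal (coefc f b K k) (Defs.comp (idnet R 1) (affA1 1 (- gridx b K k))).

Definition hidden_layer n : layer R :=
  foldr (@ldiag R) (ldef R) [seq nth (ldef R) P n | P <- [seq summand k | k <- iota 0 K.+1]].

Definition Fnet_layer1 : layer R :=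
  Defs.merge (hidden_layer 0) (head (ldef R) (sumT R 1 K.+1)).

Definition Fnet_layer2 : layer R :=
  Defs.merge (head (ldef R) (affA1 1 (f (gridx b K 0))))
    (Defs.merge (head (ldef R) (sumS R 1 K.+1)) (hidden_layer 1)).

Lemma Fnet_layers : Fnet f b K = [:: Fnet_layer1; Fnet_layer2].
Proof. by rewrite /Fnet /dsum subn0 addn1. Qed.

Lemma summand_layers_scalar n : (n < 2)%N ->
  all (@scalar_layer R) [seq nth (ldef R) P n | P <- [seq summand k | k <- iota 0 K.+1]].
Proof. by rewrite -map_comp all_map; case: n => [|[|]] // _; apply/allP. Qed.

Lemma nth_summand_layers n k : (k < K.+1)%N ->
  nth (ldef R) [seq nth (ldef R) P n | P <- [seq summand k | k <- iota 0 K.+1]] k =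
  nth (ldef R) (summand k) n.
Proof. by move=> lt_kK; rewrite -map_comp (nth_map 0%N) ?size_iota // nth_iota. Qed.

Lemma lout_hidden_layer n : (n < 2)%N -> lout (hidden_layer n) = K.+1.
Proof. by move/summand_layers_scalar/lout_diag_layer->; rewrite !size_map size_iota. Qed.

Lemma lin_hidden_layer n : (n < 2)%N -> lin (hidden_layer n) = K.+1.
Proof. by move/summand_layers_scalar/lin_diag_layer->; rewrite !size_map size_iota. Qed.

Lemma mxentry_W_hidden_layer n i j : (n < 2)%N ->
  mxentry (lW (hidden_layer n)) i j =
  if (i == j) && (i < K.+1)%N then mxentry (lW (nth (ldef R) (summand i) n)) 0 0 else 0.
Proof.
move=> lt_n2; rewrite mxentry_W_diag_layer ?summand_layers_scalar // !size_map size_iota.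
by case: ifP => // /andP[_ lt_iK]; rewrite nth_summand_layers.
Qed.

Lemma mxentry_B_hidden_layer n i : (n < 2)%N ->
  mxentry (lB (hidden_layer n)) i 0 =
  if (i < K.+1)%N then mxentry (lB (nth (ldef R) (summand i) n)) 0 0 else 0.
Proof.
move=> lt_n2; rewrite mxentry_B_diag_layer ?summand_layers_scalar // !size_map size_iota.
by case: ifP => // lt_iK; rewrite nth_summand_layers.
Qed.

Lemma mxentry_W_hidden0 i j :
  mxentry (lW (hidden_layer 0)) i j = if (i == j) && (i < K.+1)%N then 1 else 0.
Proof.
rewrite mxentry_W_hidden_layer //; case: ifP => // _.
by rewrite mxentry_dmul /= big_ord1 !mxentry_scalar1 mulr1.
Qed.

Lemma mxentry_B_hidden0 i :
  mxentry (lB (hidden_layer 0)) i 0 = if (i < K.+1)%N then - gridx b K i else 0.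
Proof.
rewrite mxentry_B_hidden_layer //; case: ifP => // _.
by rewrite mxentryD mxentry_dmul /= big_ord1 !mxentry_scalar1 mul1r mxentry0 addr0.
Qed.

Lemma mxentry_W_hidden1 i j :
  mxentry (lW (hidden_layer 1)) i j = if (i == j) && (i < K.+1)%N then coefc f b K i else 0.
Proof.
rewrite mxentry_W_hidden_layer //; case: ifP => // _.
by rewrite mxentry_dmul /= big_ord1 !mxentry_scalar1 mulr1.
Qed.

Lemma mxentry_B_hidden1 i : mxentry (lB (hidden_layer 1)) i 0 = 0.
Proof.
rewrite mxentry_B_hidden_layer //; case: ifP => // _.
by rewrite mxentryD mxentry_dmul /= big_ord1 !mxentry0 mulr0 addr0.
Qed.

Lemma mxentry_W_Fnet_layer1 k : (k < K.+1)%N -> mxentry (lW Fnet_layer1) k 0 = 1.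
Proof.
move=> lt_kK; rewrite mxentry_W_merge mxentry_dmul (_ : _ == _ = true); last first.
  by rewrite lin_hidden_layer //; apply/eqP; exact: muln1.
rewrite (eq_bigr (fun j : 'I_(lin (hidden_layer 0)) => if nat_of_ord j == k then 1 else 0 : R)).
  by rewrite -big_mkcond (big_ord1_eq _ (fun=> 1)) lin_hidden_layer // lt_kK.
move=> j _; rewrite mxentry_W_hidden0 eq_sym; case: eqP => [->|]; last by rewrite mul0r.
rewrite lt_kK mul1r /= (@mxentry_def _ _ _ _ (fun i j => ((i %% 1)%N == j)%:R)) => [|? ?].
  by rewrite muln1 lt_kK !modn1.
by rewrite mxE.
Qed.

Lemma mxentry_B_Fnet_layer1 k : (k < K.+1)%N -> mxentry (lB Fnet_layer1) k 0 = - gridx b K k.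
Proof.
move=> lt_kK; rewrite mxentry_B_merge mxentry_B_hidden0 lt_kK mxentry_dmul big1 ?if_same ?add0r //.
by move=> j _; rewrite mxentry0 mulr0.
Qed.

Lemma mxentry_W_Fnet_layer2 k : (k < K.+1)%N -> mxentry (lW Fnet_layer2) 0 k = coefc f b K k.
Proof.
move=> lt_kK; rewrite mxentry_W_merge mxentry_dmul (_ : _ == _ = true) //.
rewrite big_ord1 mxentry_scalar1 mul1r.
rewrite mxentry_W_merge mxentry_dmul (_ : _ == _ = true); last first.
  by rewrite lout_hidden_layer //; apply/eqP; exact: (esym (muln1 _)).
rewrite (eq_bigr (fun j : 'I_(lin (head (ldef R) (sumS R 1 K.+1))) =>
  if nat_of_ord j == k then coefc f b K k else 0)).
  by rewrite -big_mkcond (big_ord1_eq _ (fun=> coefc f b K k)) /= muln1 lt_kK.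
move=> j _; rewrite mxentry_W_hidden1; case: eqP => [->|]; last by rewrite mulr0.
rewrite lt_kK mulrC /= (@mxentry_def _ _ _ _ (fun i j => ((j %% 1)%N == i)%:R)) => [|? ?].
  by rewrite muln1 lt_kK !modn1 mulr1.
by rewrite mxE.
Qed.

Lemma mxentry_B_Fnet_layer2 : mxentry (lB Fnet_layer2) 0 0 = f (gridx b K 0).
Proof.
rewrite mxentry_B_merge mxentry_dmul (_ : _ == _ = true) // big_ord1 !mxentry_scalar1 mul1r.
rewrite mxentry_B_merge mxentry0 addr0 mxentry_dmul big1 ?if_same ?add0r //.
by move=> j _; rewrite mxentry_B_hidden1 mulr0.
Qed.

Lemma realize1_Fnet x : realize1 (@relu R) (Fnet f b K) x =
  \sum_(0 <= k < K.+1) coefc f b K k * relu (x - gridx b K k) + f (gridx b K 0).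
Proof.
rewrite Fnet_layers realize1_two_layers ?lin_hidden_layer ?lout_hidden_layer //.
rewrite {1}(_ : lin Fnet_layer2 = K.+1); last exact: lin_hidden_layer.
rewrite mxentry_B_Fnet_layer2; congr (_ + _); apply: eq_big_nat => k /andP[_ lt_kK].
by rewrite mxentry_W_Fnet_layer1 ?mxentry_B_Fnet_layer1 ?mxentry_W_Fnet_layer2 ?mul1r.
Qed.

Lemma annD1_Fnet : annD1 (Fnet f b K) = K.+1.
Proof. by rewrite Fnet_layers; exact: lout_hidden_layer. Qed.

Lemma annP_Fnet : annP (Fnet f b K) = (3 * K.+1 + 1)%N.
Proof.
rewrite Fnet_layers /annP !big_cons big_nil.
rewrite [lout Fnet_layer1]lout_hidden_layer // [lin Fnet_layer2]lin_hidden_layer //=; lia.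
Qed.

End NetworkStructure.

Lemma summation_by_parts (R : comPzRingType) n (a r : nat -> R) :
  \sum_(0 <= k < n.+1) (a k - (if k is k'.+1 then a k' else 0)) * r k =
  \sum_(0 <= j < n) a j * (r j - r j.+1) + a n * r n.
Proof.
elim: n => [|n IH]; first by rewrite big_nat1 big_geq // subr0 add0r.
by rewrite big_nat_recr //= IH big_nat_recr //=; ring.
Qed.

Section Ramp.
Variable R : realType.

Definition ramp (a c t : R) : R := relu (t - a) - relu (t - c).

Lemma relu_cases (t : R) : (relu t = t /\ 0 <= t) \/ (relu t = 0 /\ t <= 0).
Proof. by rewrite /relu /Num.max; case: ltP => t0; [right; split => //; apply: ltW | left]. Qed.

Ltac case_relu := rewrite /ramp; repeat match goal with |- context[@relu R ?t] =>
  case: (relu_cases t) => [[-> ?]|[-> ?]] end.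

Lemma ramp_left a c t : a <= c -> t <= a -> ramp a c t = 0.
Proof. by move=> ac ta; case_relu; lra. Qed.

Lemma ramp_right a c t : a <= c -> c <= t -> ramp a c t = c - a.
Proof. by move=> ac ct; case_relu; lra. Qed.

Lemma ramp_incr a c x y : a <= c -> x <= y -> 0 <= ramp a c y - ramp a c x <= y - x.
Proof. by move=> ac xy; apply/andP; case_relu; split; lra. Qed.

End Ramp.

Section PowerBounds.
Variable R : realType.

Lemma powR_balance (eps b q : R) : 0 < eps -> 0 <= b -> 1 < q ->
  (eps * b `^ (q - 1)) `^ (q / (q - 1)) * eps `^ (- (q / (q - 1))) = b `^ q.
Proof.
move=> eps_gt0 b_ge0 q_gt1.
rewrite powRM ?(ltW eps_gt0) ?powR_ge0 // -powRrM.
have -> : (q - 1) * (q / (q - 1)) = q by field; rewrite subr_eq0 gt_eqF.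
rewrite powRN mulrAC mulfV ?mul1r //.
by rewrite gt_eqF // powR_gt0.
Qed.

Lemma powR_ge1 (x r : R) : 1 <= x -> 0 <= r -> 1 <= x `^ r.
Proof.
move=> x_ge1 r_ge0; have := @ge0_ler_powR R r r_ge0 1 x; rewrite powR1.
by apply; rewrite ?nnegrE ?ler01 ?(le_trans ler01).
Qed.

Lemma linear_le_powR (c eps b q t : R) : 0 <= eps -> 1 <= q -> 0 <= b -> b <= t ->
  c <= eps * b `^ (q - 1) -> c * t <= eps * t `^ q.
Proof.
move=> eps_ge0 q_ge1 b_ge0 le_bt le_c; have t_ge0 := le_trans b_ge0 le_bt.
apply: (le_trans (ler_wpM2r t_ge0 le_c)).
rewrite -(mulr_powRB1 t_ge0 (lt_le_trans ltr01 q_ge1)) [t * _]mulrC mulrA.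
rewrite ler_wpM2r // ler_wpM2l //.
by apply: ge0_ler_powR; rewrite ?nnegrE // subr_ge0.
Qed.

End PowerBounds.

Section Interpolation.
Variables (R : realType) (f : R -> R) (b L : R) (K : nat).
Hypotheses (b_gt0 : 0 < b) (K_gt0 : (0 < K)%N).
Hypothesis f_lip : forall x y, `|f x - f y| <= L * `|x - y|.

Local Notation x_ := (gridx b K).

Definition mesh : R := 2 * b / K%:R.

Definition slope j : R := (f (x_ (minn j.+1 K)) - f (x_ j)) / mesh.

Definition interp (x : R) : R :=
  \sum_(0 <= j < K) slope j * ramp (x_ j) (x_ j.+1) x + f (x_ 0).

Lemma mesh_gt0 : 0 < mesh.
Proof. by rewrite divr_gt0 ?mulr_gt0 ?ltr0n. Qed.

Lemma gridxE k : x_ k = - b + k%:R * mesh.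
Proof. by rewrite /gridx /mesh !mulrA [_ * 2]mulrC. Qed.

Lemma gridxS k : x_ k.+1 = x_ k + mesh.
Proof. by rewrite !gridxE -addn1 natrD; ring. Qed.

Lemma gridx0 : x_ 0 = - b.
Proof. by rewrite gridxE mul0r addr0. Qed.

Lemma gridxK : x_ K = b.
Proof. by rewrite gridxE /mesh; field; rewrite pnatr_eq0 -lt0n. Qed.

Lemma gridx_le i k : (i <= k)%N -> x_ i <= x_ k.
Proof. by move=> ik; rewrite !gridxE lerD2l ler_pM2r ?mesh_gt0 // ler_nat. Qed.

Lemma coefcE k : (k <= K)%N ->
  coefc f b K k = slope k - (if k is k'.+1 then slope k' else 0).
Proof.
have b0 : b != 0 by rewrite gt_eqF.
have K0 : K%:R != 0 :> R by rewrite pnatr_eq0 -lt0n.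
rewrite /coefc /slope /mesh; case: k => [|k] le_kK /=.
  by rewrite subr0; field; rewrite K0 b0.
by rewrite (minn_idPl le_kK); field; rewrite K0 b0.
Qed.

Lemma realize1_Fnet_interp x : realize1 (@relu R) (Fnet f b K) x = interp x.
Proof.
rewrite realize1_Fnet /interp; congr (_ + _).
transitivity (\sum_(0 <= k < K.+1)
    (slope k - (if k is k'.+1 then slope k' else 0)) * relu (x - x_ k)).
  by apply: eq_big_nat => k /andP[_ lt_kK]; rewrite coefcE.
rewrite summation_by_parts /slope (minn_idPr (leqnSn K)) subrr !mul0r addr0.
by apply: eq_big_nat.
Qed.

Lemma lip_const_ge0 : 0 <= L.
Proof. by have := f_lip 1 0; rewrite subr0 normr1 mulr1; apply: le_trans. Qed.

Lemma slope_bound j : (j < K)%N -> `|slope j| <= L.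
Proof.
move=> lt_jK; rewrite /slope (minn_idPl lt_jK) normf_div (gtr0_norm mesh_gt0).
rewrite ler_pdivrMr ?mesh_gt0 //; have := f_lip (x_ j.+1) (x_ j).
by rewrite {2}gridxS addrAC subrr add0r (gtr0_norm mesh_gt0).
Qed.

Lemma sum_ramp_gridx t :
  \sum_(0 <= j < K) ramp (x_ j) (x_ j.+1) t = ramp (x_ 0) (x_ K) t.
Proof.
rewrite /ramp (telescope_sumr_eq (fun j => - relu (t - x_ j))) //; first by ring.
by move=> j _; ring.
Qed.

Lemma interp_lipschitz x y : `|interp x - interp y| <= L * `|x - y|.
Proof.
wlog le_xy : x y / x <= y.
  by move=> W; case: (leP x y) => [/W //|/ltW /W]; rewrite distrC [`|y - x|]distrC.
rewrite distrC [`|x - y|]distrC (ger0_norm (_ : 0 <= y - x)) ?subr_ge0 //.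
rewrite /interp opprD addrACA subrr addr0 -sumrB.
apply: (le_trans (ler_norm_sum _ _ _)).
apply: (@le_trans _ _ (\sum_(0 <= j < K) L * (ramp (x_ j) (x_ j.+1) y - ramp (x_ j) (x_ j.+1) x))).
  apply: ler_sum_nat => j /andP[_ lt_jK].
  have /andP[d_ge0 _] := ramp_incr (gridx_le (leqnSn j)) le_xy.
  by rewrite -mulrBr normrM (ger0_norm d_ge0) ler_wpM2r ?slope_bound.
rewrite -mulr_sumr sumrB !sum_ramp_gridx ler_wpM2l ?lip_const_ge0 //.
by case/andP: (ramp_incr (gridx_le (leq0n K)) le_xy).
Qed.

Lemma interp_gridx m : (m <= K)%N -> interp (x_ m) = f (x_ m).
Proof.
move=> le_mK; rewrite /interp (big_cat_nat (leq0n m) le_mK) /=.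
rewrite [X in _ + X + _]big1_seq ?addr0; last first.
  move=> j /andP[_]; rewrite mem_index_iota => /andP[le_mj _].
  by rewrite ramp_left ?mulr0 // gridx_le.
rewrite (telescope_sumr_eq (fun j => f (x_ j))) //; first by rewrite subrK.
move=> j /andP[_ lt_jm]; rewrite ramp_right ?gridx_le //.
rewrite {1}gridxS addrAC subrr add0r /slope (minn_idPl (leq_trans lt_jm le_mK)).
by rewrite divfK ?gt_eqF ?mesh_gt0.
Qed.

Lemma exists_gridx_near n x : x_ 0 <= x <= x_ n + mesh / 2 ->
  exists2 m, (m <= n)%N & `|x - x_ m| <= mesh / 2.
Proof.
case/andP=> ge_x0; elim: n => [|n IH] le_xn.
  by exists 0%N => //; rewrite ger0_norm ?subr_ge0 // lerBlDl.
have [/IH [m le_mn near_m]|lt_xn] := leP x (x_ n + mesh / 2).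
  by exists m => //; apply: leqW.
exists n.+1 => //; have := mesh_gt0; move: le_xn lt_xn; rewrite gridxS ler_norml.
by move=> *; apply/andP; split; lra.
Qed.

Lemma interp_error_gridx m x : (m <= K)%N -> `|interp x - f x| <= 2 * L * `|x - x_ m|.
Proof.
move=> le_mK; apply: (le_trans (ler_distD (interp (x_ m)) _ _)).
rewrite -mulrA mulr_natl mulr2n lerD ?interp_lipschitz // interp_gridx //.
by rewrite [`|x - _|]distrC f_lip.
Qed.

Lemma interp_error_in x : - b <= x <= b -> `|interp x - f x| <= L * mesh.
Proof.
case/andP=> ge_xb le_xb; have [|m le_mK near_m] := @exists_gridx_near K x.
  by rewrite gridx0 gridxK ge_xb /=; have := mesh_gt0; lra.
apply: (le_trans (interp_error_gridx x le_mK)).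
by rewrite [2 * L]mulrC -mulrA ler_wpM2l ?lip_const_ge0 //; lra.
Qed.

Lemma interp_error_out x : b <= `|x| -> `|interp x - f x| <= 2 * L * `|x|.
Proof.
have twoL_ge0 : 0 <= 2 * L by rewrite mulr_ge0 ?lip_const_ge0.
have [x_ge0|x_lt0] := lerP 0 x.
  rewrite (ger0_norm x_ge0) => le_bx; apply: (le_trans (interp_error_gridx x (leqnn K))).
  by rewrite gridxK ger0_norm ?subr_ge0 // ler_wpM2l // gerBl ltW.
rewrite (ltr0_norm x_lt0) => le_bx; apply: (le_trans (interp_error_gridx x (leq0n K))).
by rewrite gridx0 ler0_norm ?ler_wpM2l //; have := b_gt0; lra.
Qed.

Lemma interp_error_weighted (eps q : R) x : 0 <= eps -> 1 <= q ->
  L * mesh <= eps -> 2 * L <= eps * b `^ (q - 1) ->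
  `|interp x - f x| <= eps * Num.max 1 (`|x| `^ q).
Proof.
move=> eps_ge0 q_ge1 mesh_le twoL_le; have [le_xb|lt_bx] := leP `|x| b.
  apply: le_trans (interp_error_in _) _; first by rewrite -ler_norml.
  by rewrite (le_trans mesh_le) // ler_peMr // le_max lexx.
apply: le_trans (interp_error_out (ltW lt_bx)) _.
apply: le_trans (linear_le_powR eps_ge0 q_ge1 (ltW b_gt0) (ltW lt_bx) twoL_le) _.
by rewrite ler_wpM2l // le_max lexx orbT.
Qed.

End Interpolation.

Local Open Scope classical_set_scope.

Theorem mainTheorem16 (R : realType) (eps L q b : R) (K : nat) (f : R -> R) :
  0 < eps -> eps <= 1 -> 0 <= L -> 1 < q -> 1 <= b ->
  Num.max 1 (2 * L) = eps * b `^ (q - 1) ->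
  (0 < K)%N -> 2 * L * b / eps <= K%:R -> K%:R <= 2 * L * b / eps + 1 ->
  (forall x y : R, `|f x - f y| <= L * `|x - y|) ->
  let F := Fnet f b K in
  let RF := realize1 (@relu R) F in
  [/\ (forall x y : R, `|RF x - RF y| <= L * `|x - y|),
      (ereal_sup [set (`|RF x - f x|)%:E | x in `[(- b)%R, b%R]] <= (2 * L * b / K%:R)%:E)%E
        /\ 2 * L * b / K%:R <= eps,
      (forall x : R, `|RF x - f x| <= eps * Num.max 1 (`|x| `^ q)),
      (annD1 F)%:R <= 2 * (Num.max 1 (2 * L)) `^ (q / (q - 1)) * eps `^ (- (q / (q - 1))) + 1
    & annP F = (3 * annD1 F + 1)%N /\
      (annP F)%:R <= 12 * (Num.max 1 (2 * L)) `^ (q / (q - 1)) * eps `^ (- (q / (q - 1)))].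
Proof.
move=> eps_gt0 _ _ q_gt1 b_ge1 balance K_gt0 K_ge K_le f_lip F RF.
have b_gt0 : 0 < b := lt_le_trans ltr01 b_ge1.
have RFE x : RF x = interp f b K x := realize1_Fnet_interp f b_gt0 K_gt0 x.
have meshE : L * mesh b K = 2 * L * b / K%:R by rewrite /mesh !mulrA [L * 2]mulrC.
have mesh_le : L * mesh b K <= eps.
  by rewrite meshE ler_pdivrMr ?ltr0n // [eps * _]mulrC -ler_pdivrMr.
have twoL_le : 2 * L <= eps * b `^ (q - 1) by rewrite -balance le_max lexx orbT.
have K_le_bq : K%:R <= b `^ q + 1.
  suff : 2 * L * b / eps <= b `^ q by lra.
  rewrite ler_pdivrMr // [_ * eps]mulrC.
  exact: linear_le_powR (ltW eps_gt0) (ltW q_gt1) (ltW b_gt0) (lexx b) twoL_le.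
have bq_ge1 : 1 <= b `^ q by rewrite powR_ge1 // ltW // (lt_trans ltr01).
have powE : Num.max 1 (2 * L) `^ (q / (q - 1)) * eps `^ (- (q / (q - 1))) = b `^ q.
  by rewrite balance powR_balance // ltW.
split.
- by move=> x y; rewrite !RFE interp_lipschitz.
- split; last by rewrite -meshE.
  apply: ge_ereal_sup => _ [x x_in <-].
  by rewrite lee_fin RFE -meshE interp_error_in // -in_itv.
- move=> x; rewrite RFE.
  by apply: (interp_error_weighted b_gt0 K_gt0 f_lip) => //; apply: ltW.
- by rewrite annD1_Fnet -mulrA powE -addn1 natrD; lra.
- rewrite annP_Fnet annD1_Fnet; split=> //.
  by rewrite -mulrA powE natrD natrM -addn1 natrD; lra.
Qed.
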